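(* Let $\Gamma$ be a finite simple graph and suppose $\psi\colon A(P_3^c)\to A(\Gamma)$ is an injective homomorphism. Then there is a full embedding $\iota\colon P_3^c\to\Gamma$ with $\iota(V(P_3^c))\subset\mathrm{supp}(\psi)$.
   Context: $A(\Gamma) = \langle V(\Gamma) \mid uv=vu \text{ whenever } \{u,v\}\in E(\Gamma)\rangle$ is the right-angled Artin group. $P_3$ is the path graph with vertices $v_1,v_2,v_3$ and edges $\{v_1,v_2\},\{v_2,v_3\}$; its complement $P_3^c$ has the single edge $\{v_1,v_3\}$ plus the isolated vertex $v_2$ (so $A(P_3^c)\cong\mathbb{Z}*\mathbb{Z}^2$). A graph embedding is an injective vertex map preserving adjacency; it is full if it also preserves non-adjacency. The support $\mathrm{supp}(g)$ of $g\in A(\Gamma)$ is the set of vertices $v$ such that $v$ or $v^{-1}$ occurs in a (equivalently, any) shortest word representing $g$; for a homomorphism $\psi\colon A(\Lambda)\to A(\Gamma)$, $\mathrm{supp}(\psi)=\bigcup_{v\in V(\Lambda)}\mathrm{supp}(\psi(v))$. *)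

From Stdlib Require Import Relations.
From mathcomp Require Import all_boot.
Set Implicit Arguments. Unset Strict Implicit. Unset Printing Implicit Defensive.

(* Words in the generators of A(Gamma): a letter (v, true) is v, (v, false) is v^-1. *)
Definition raag_word (T : Type) := seq (T * bool).

Definition inv_word (T : Type) (w : raag_word T) : raag_word T :=
  rev (map (fun l => (l.1, ~~ l.2)) w).

Inductive raag_step (T : Type) (e : rel T) : raag_word T -> raag_word T -> Prop :=
| raag_cancel (u v : raag_word T) (x : T) (b : bool) :
    raag_step e (u ++ [:: (x, b); (x, ~~ b)] ++ v) (u ++ v)
| raag_comm (u v : raag_word T) (x y : T) (b c : bool) :
    e x y -> raag_step e (u ++ [:: (x, b); (y, c)] ++ v) (u ++ [:: (y, c); (x, b)] ++ v).

Definition raag_eq (T : Type) (e : rel T) : relation (raag_word T) :=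
  clos_refl_sym_trans _ (raag_step e).

(* A homomorphism A(Lambda) -> A(Gamma) is given by the images f v of generators,
   subject to: images of adjacent generators commute. *)
Definition is_raag_hom (L G : Type) (eL : rel L) (eG : rel G)
  (f : L -> raag_word G) : Prop :=
  forall u v, eL u v -> raag_eq eG (f u ++ f v) (f v ++ f u).

Definition hom_ext (L G : Type) (f : L -> raag_word G) (w : raag_word L) : raag_word G :=
  flatten (map (fun l => if l.2 then f l.1 else inv_word (f l.1)) w).

Definition raag_hom_injective (L G : Type) (eL : rel L) (eG : rel G)
  (f : L -> raag_word G) : Prop :=
  forall w1 w2, raag_eq eG (hom_ext f w1) (hom_ext f w2) -> raag_eq eL w1 w2.

Definition in_supp (G : eqType) (eG : rel G) (w : raag_word G) (x : G) : Prop :=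
  exists w' : raag_word G,
    [/\ raag_eq eG w' w,
        (forall w'', raag_eq eG w'' w -> size w' <= size w'') &
        x \in map fst w'].

Definition in_hom_supp (L : Type) (G : eqType) (eG : rel G)
  (f : L -> raag_word G) (x : G) : Prop :=
  exists v : L, in_supp eG (f v) x.

(* Complement of P_3 on vertices 0,1,2 (= v1,v2,v3): single edge {0,2}. *)
Definition P3c : rel 'I_3 :=
  fun i j => ((val i == 0) && (val j == 2)) || ((val i == 2) && (val j == 0)).

Definition full_embedding (L G : Type) (eL : rel L) (eG : rel G) (i : L -> G) : Prop :=
  injective i /\ (forall a b, eG (i a) (i b) = eL a b).

From HB Require Import structures.
From Stdlib Require Import Relations Classical.
From mathcomp Require Import all_boot all_algebra zify.
Set Implicit Arguments. Unset Strict Implicit. Unset Printing Implicit Defensive.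

(* Let S be the set of vertices occurring in shortest representatives of the images
   of the generators. If no full P3^c sits on S, non-adjacency is transitive on S, so
   the letters of S generate a direct product of free groups, one for each
   non-adjacency class. Commuting elements of a free group satisfy a nontrivial
   relation u^p v^q = 1, so in every factor the images of v1 and v3 do. The iterated
   commutator of the conjugates v2^i v1^p_i v3^q_i v2^-i over all classes therefore
   dies in every factor, hence in A(Gamma); but a representation of A(P3^c) by
   integral unipotent matrices shows that it is nontrivial, against injectivity. *)

(** * Free groups *)

Section FreeReduction.
Variable X : eqType.
Notation letter := (X * bool)%type.

Definition linv (l : letter) : letter := (l.1, ~~ l.2).
Lemma linvK : involutive linv.
Proof. by case=> x b; rewrite /linv /= negbK. Qed.

Definition winv (w : seq letter) := rev (map linv w).

Definition reduced (w : seq letter) := sorted (fun a b => b != linv a) w.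

Definition push (l : letter) (w : seq letter) :=
  if w is l' :: w' then (if l' == linv l then w' else l :: w) else [:: l].
Definition red (w : seq letter) := foldr push [::] w.

Lemma reduced_cons l w :
  reduced (l :: w) = (if w is l' :: _ then l' != linv l else true) && reduced w.
Proof. by case: w. Qed.

Lemma reduced_behead l w : reduced (l :: w) -> reduced w.
Proof. by rewrite reduced_cons => /andP[]. Qed.

Lemma reduced_catl u v : reduced (u ++ v) -> reduced u.
Proof. by apply: prefix_sorted; apply: prefix_prefix. Qed.
Lemma reduced_catr u v : reduced (u ++ v) -> reduced v.
Proof. by apply: suffix_sorted; apply: suffix_suffix. Qed.

Lemma push_reduced l w : reduced w -> reduced (push l w).
Proof.
case: w => [|l' w] // Hw /=.
case: ifP => H; first exact: reduced_behead Hw.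
by rewrite reduced_cons H Hw.
Qed.

Lemma foldr_push_reduced u w : reduced w -> reduced (foldr push w u).
Proof. by move=> Hw; elim: u => //= l u; apply: push_reduced. Qed.

Lemma red_reduced w : reduced (red w).
Proof. exact: foldr_push_reduced. Qed.

Lemma red_id w : reduced w -> red w = w.
Proof.
elim: w => // l w IH Hw; rewrite /= IH ?(reduced_behead Hw) //.
move: Hw; rewrite reduced_cons; case: w {IH} => //= l' w /andP[H _].
by rewrite (negbTE H).
Qed.

Lemma red_idem w : red (red w) = red w.
Proof. exact: red_id (red_reduced w). Qed.

Lemma pushK l w : reduced w -> push l (push (linv l) w) = w.
Proof.
case: w => [|l' w]; first by rewrite /= eqxx.
move=> Hw; rewrite /= linvK; case: eqP => [El|/eqP H]; last by rewrite /= eqxx.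
rewrite El in Hw; move: Hw; rewrite reduced_cons.
case: w => [|l'' w] /=; first by rewrite El.
by case/andP=> H _; rewrite (negbTE H) El.
Qed.

Lemma pushVK l w : reduced w -> push (linv l) (push l w) = w.
Proof. by move=> H; have := pushK (linv l) H; rewrite linvK. Qed.

Lemma red_cat u v : red (u ++ v) = foldr push (red v) u.
Proof. by rewrite /red foldr_cat. Qed.

Lemma foldr_push_red u w : reduced w -> foldr push w (red u) = foldr push w u.
Proof.
move=> Hw; elim: u => //= l u IH.
rewrite -IH; have := red_reduced u.
case: (red u) => [|l' r] //= Hr; case: eqP => [El|_] //=.
by rewrite El pushK // foldr_push_reduced.
Qed.

Lemma red_catl u v : red (red u ++ v) = red (u ++ v).
Proof. by rewrite !red_cat foldr_push_red // red_reduced. Qed.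
Lemma red_catr u v : red (u ++ red v) = red (u ++ v).
Proof. by rewrite !red_cat red_idem. Qed.

Lemma red_cancel u v l : red (u ++ [:: l; linv l] ++ v) = red (u ++ v).
Proof. by rewrite !red_cat /= pushK // red_reduced. Qed.

Lemma winv_cons l w : winv (l :: w) = rcons (winv w) (linv l).
Proof. by rewrite /winv /= rev_cons. Qed.
Lemma winv_rcons w l : winv (rcons w l) = linv l :: winv w.
Proof. by rewrite /winv map_rcons rev_rcons. Qed.
Lemma winv_cat u v : winv (u ++ v) = winv v ++ winv u.
Proof. by rewrite /winv map_cat rev_cat. Qed.
Lemma winvK : involutive winv.
Proof. by move=> w; rewrite /winv map_rev revK -map_comp (eq_map linvK) map_id. Qed.
Lemma size_winv w : size (winv w) = size w.
Proof. by rewrite size_rev size_map. Qed.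

Lemma foldr_push_winv u w : reduced w -> foldr push (foldr push w u) (winv u) = w.
Proof.
elim: u w => //= l u IH w Hw.
by rewrite winv_cons -cats1 foldr_cat /= pushVK ?IH ?foldr_push_reduced.
Qed.

Lemma red_winv_cat u : red (winv u ++ u) = [::].
Proof. by rewrite red_cat /red foldr_push_winv. Qed.
Lemma red_cat_winv u : red (u ++ winv u) = [::].
Proof. by rewrite -{1}(winvK u) red_winv_cat. Qed.

Lemma red_split u v : reduced u -> reduced v ->
  exists s u1 v1, [/\ u = u1 ++ s, v = winv s ++ v1 & red (u ++ v) = u1 ++ v1].
Proof.
move=> Hu Hv; rewrite red_cat (red_id Hv).
elim: u Hu => [|l u IH] Hu; first by exists [::], [::], v.
have [s [u1 [v1 [E1 E2 E3]]]] := IH (reduced_behead Hu).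
rewrite /= E3.
case: u1 E1 E3 => [|m u1] E1 E3 /=; last first.
  have Hm : m != linv l by move: Hu; rewrite reduced_cons E1 /= => /andP[].
  by rewrite (negbTE Hm); exists s, (l :: m :: u1), v1; rewrite E1 E2.
case: v1 E2 E3 => [|m v1] E2 E3 /=.
  by exists s, [:: l], [::]; rewrite E1 E2.
case: eqP => [Em|_].
  exists (l :: s), [::], v1; split => //; first by rewrite E1.
  by rewrite E2 winv_cons -cats1 -catA Em.
by exists s, [:: l], (m :: v1); rewrite E1 E2.
Qed.
End FreeReduction.

Section FreeGroup.
Variable X : choiceType.
Notation letter := (X * bool)%type.

Record fg := FG { fgval :> seq letter; fgP : reduced fgval }.
HB.instance Definition _ := [isSub for fgval].
HB.instance Definition _ := [Choice of fg by <:].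

Definition fgred (w : seq letter) : fg := FG (red_reduced w).
Definition fg_one : fg := @FG [::] isT.
Definition fg_mul (u v : fg) : fg := fgred (val u ++ val v).
Definition fg_inv (u : fg) : fg := fgred (winv (val u)).

Lemma fgredK (u : fg) : fgred (val u) = u.
Proof. by apply: val_inj; rewrite /= red_id // fgP. Qed.

Lemma fg_mulA : associative fg_mul.
Proof. by move=> u v w; apply: val_inj; rewrite /= red_catl red_catr catA. Qed.
Lemma fg_mul1 : left_id fg_one fg_mul.
Proof. by move=> u; rewrite /fg_mul /= fgredK. Qed.
Lemma fg_mulg1 : right_id fg_one fg_mul.
Proof. by move=> u; rewrite /fg_mul /= cats0 fgredK. Qed.
Lemma fg_mulV : left_inverse fg_one fg_inv fg_mul.
Proof. by move=> u; apply: val_inj; rewrite /= red_catl red_winv_cat. Qed.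
Lemma fg_mulgV : right_inverse fg_one fg_inv fg_mul.
Proof. by move=> u; apply: val_inj; rewrite /= red_catr red_cat_winv. Qed.

HB.instance Definition _ :=
  isGroup.Build fg fg_mulA fg_mul1 fg_mulg1 fg_mulV fg_mulgV.

Local Open Scope group_scope.

Lemma val_fg_mul (u v : fg) : val (u * v) = red (val u ++ val v).
Proof. by []. Qed.
Lemma fgredM u v : fgred (u ++ v) = fgred u * fgred v.
Proof. by apply: val_inj; rewrite /= red_catl red_catr. Qed.
Lemma fgredV u : fgred (winv u) = (fgred u)^-1.
Proof.
apply: (mulgI (fgred u)); rewrite mulgV -fgredM; apply: val_inj.
exact: red_cat_winv.
Qed.
Lemma fgred1 : fgred [::] = 1. Proof. by apply: val_inj. Qed.
Lemma fgred_eq u v : (fgred u = fgred v) <-> red u = red v.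
Proof. by split=> [E|E]; [have := congr1 val E | apply: val_inj]. Qed.
End FreeGroup.

Section IntPowers.
Local Open Scope group_scope.
Variable G : groupType.
Implicit Types x y g : G.

Definition expgz x (z : int) : G :=
  match z with Posz n => x ^+ n | Negz n => (x ^+ n.+1)^-1 end.

Lemma expgz_subn x (n m : nat) : expgz x (n%:Z - m%:Z)%R = x ^+ n * (x ^+ m)^-1.
Proof.
case: (leqP m n) => H.
  by rewrite subzn //= -{2}(subnK H) expgnDr mulgK.
have -> : (n%:Z - m%:Z)%R = Negz (m - n).-1.
  rewrite NegzE prednK ?subn_gt0 // -[in RHS](subzn (ltnW H)).
  by rewrite GRing.opprB.
rewrite /= prednK ?subn_gt0 // -{2}(subnK (ltnW H)) expgnDr invgM.
by rewrite mulgA mulgV mul1g.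
Qed.

Lemma int_subn (z : int) : exists n m : nat, z = (n%:Z - m%:Z)%R.
Proof.
case: z => n; first by exists n, 0%N; rewrite GRing.subr0.
by exists 0%N, n.+1; rewrite GRing.sub0r.
Qed.

Lemma expgzD x (a b : int) : expgz x (a + b)%R = expgz x a * expgz x b.
Proof.
have [n1 [m1 ->]] := int_subn a; have [n2 [m2 ->]] := int_subn b.
have -> : (n1%:Z - m1%:Z + (n2%:Z - m2%:Z))%R = ((n1 + n2)%N%:Z - (m1 + m2)%N%:Z)%R.
  by rewrite !PoszD GRing.addrACA GRing.opprD.
rewrite !expgz_subn !expgnDr invgM -!mulgA; congr (_ * _).
have cXV k l : commute (x ^+ k) (x ^+ l)^-1 by apply: commuteV; apply: commuteX2.
rewrite mulgA; apply: commute_sym; apply: commuteM; first exact/commute_sym.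
by apply: commuteV; apply/commute_sym/commuteV; apply: commuteX2.
Qed.

Lemma expgzN x (a : int) : expgz x (- a)%R = (expgz x a)^-1.
Proof. by apply: (mulgI (expgz x a)); rewrite mulgV -expgzD GRing.subrr. Qed.

Lemma expgz1g (a : int) : expgz 1 a = 1.
Proof. by case: a => n /=; rewrite expg1n ?invg1. Qed.

Lemma commute_expgz x y (a b : int) : commute x y -> commute (expgz x a) (expgz y b).
Proof.
move=> C; case: a => n; case: b => m /=;
  by repeat first [apply: commuteV | (apply: commute_sym; apply: commuteV)];
     apply: commuteX2.
Qed.

Lemma expgzMn x y (a : int) : commute x y -> expgz (x * y) a = expgz x a * expgz y a.
Proof.
move=> C; case: a => n /=; rewrite expgMn // invgM.
by apply/commute_sym/commuteV/commute_sym/commuteV; apply: commuteX2.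
Qed.

Lemma expgzJ x g (a : int) : expgz (x ^ g) a = (expgz x a) ^ g.
Proof. by case: a => n /=; rewrite ?conjVg conjXg. Qed.

Lemma expgzV x (a : int) : expgz x^-1 a = (expgz x a)^-1.
Proof. by case: a => n /=; rewrite expVgn. Qed.

Definition dependent x y :=
  exists p q : int, (p, q) != (0%R, 0%R) /\ expgz x p * expgz y q = 1.

Lemma dependent_sym x y : commute x y -> dependent x y -> dependent y x.
Proof.
move=> C [p [q [H E]]]; exists q, p; split.
  by move: H; apply: contra; rewrite !xpair_eqE andbC.
by rewrite -(commute_expgz p q C).
Qed.

Lemma dependent_of_mulr x y : commute x y -> dependent x (x * y) -> dependent x y.
Proof.
move=> C [p [q [H E]]]; exists (p + q)%R, q; split.
  move: H; apply: contra; rewrite !xpair_eqE => /andP[/eqP H1 /eqP H2].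
  by move: H1; rewrite H2 GRing.addr0 => ->; rewrite eqxx.
by rewrite expgzD -mulgA -expgzMn.
Qed.

Lemma dependent_of_divr x y : commute x y -> dependent x (x^-1 * y) -> dependent x y.
Proof.
move=> C [p [q [H E]]]; exists (p - q)%R, q; split.
  move: H; apply: contra; rewrite !xpair_eqE => /andP[/eqP H1 /eqP H2].
  by move: H1; rewrite H2 GRing.subr0 => ->; rewrite eqxx.
rewrite expgzD -mulgA expgzN -expgzV -expgzMn //.
by apply/commute_sym/commuteV/commute_sym.
Qed.

Lemma dependentJ x y g : dependent x y -> dependent (x ^ g) (y ^ g).
Proof.
move=> [p [q [H E]]]; exists p, q; split => //.
by rewrite !expgzJ -conjMg E conj1g.
Qed.

Lemma dependent1x y : dependent 1 y.
Proof. by exists 1%R, 0%R; split => //; rewrite expgz1g mul1g. Qed.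
Lemma dependentx1 x : dependent x 1.
Proof. by exists 0%R, 1%R; split => //; rewrite expgz1g mulg1. Qed.
End IntPowers.

Section FreeCentralizers.
Local Open Scope group_scope.
Variable X : choiceType.
Notation fg := (fg X).
Implicit Types u v a b : fg.

Lemma fg1P u : val u = [::] -> u = 1.
Proof. by move=> Hu; apply: val_inj. Qed.

Lemma fg_conj_split u x w : val u = x :: rcons w (linv x) ->
  exists u' : fg, [/\ val u' = w, u = u' ^ fgred [:: linv x] & size w = (size u).-2].
Proof.
move=> E; have Hr : reduced w.
  by have := fgP u; rewrite E => /reduced_behead; rewrite -cats1 => /reduced_catl.
exists (FG Hr); split => //; last by rewrite E /= size_rcons.
have -> : FG Hr = fgred w by apply: val_inj; rewrite /= red_id.
rewrite /conjg -fgredV -[u]fgredK E -!fgredM; apply/fgred_eq.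
by rewrite /= (red_id Hr) /winv /= linvK cats1.
Qed.

Variable n : nat.
Hypothesis IHn : forall u v, size u + size v <= n -> commute u v -> dependent u v.

(* If [a] is a prefix of [b], induction applies to [a] and [a^-1 b]. *)
Lemma dependent_of_cat_commute a b : size a + size b <= n.+1 -> commute a b ->
  val a != [::] -> val a ++ val b = val b ++ val a -> size a <= size b ->
  dependent a b.
Proof.
move=> Hab Cab Ha0 Eab Sab.
have Eb : val b = val a ++ drop (size a) b.
  have := congr1 (take (size a)) Eab.
  by rewrite take_size_cat // takel_cat // => Et; rewrite {1}Et cat_take_drop.
have Hr : reduced (drop (size a) b).
  by apply: (@reduced_catr _ (val a)); rewrite -Eb; exact: fgP.
have Eb' : a^-1 * b = FG Hr.
  apply: (mulgI a); rewrite mulgA mulgV mul1g; apply: val_inj.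
  by rewrite val_fg_mul /= -Eb red_id // fgP.
apply: dependent_of_divr => //; rewrite Eb'; apply: IHn; last first.
  by rewrite -Eb'; apply: commuteM => //; apply: commuteV.
rewrite /= size_drop.
have : 0 < size a by rewrite lt0n size_eq0.
move: Hab Sab; move: (size a) (size b) => x y; lia.
Qed.

(* Two elements starting with [x] and ending with [x^-1] are conjugates of shorter ones. *)
Lemma dependent_of_conj_split u v x w1 w2 : size u + size v <= n.+1 ->
  commute u v -> val u = x :: rcons w1 (linv x) -> val v = x :: rcons w2 (linv x) ->
  dependent u v.
Proof.
move=> Hn C Eu Ev.
have [u'' [Hu1 Hu2 Hu3]] := fg_conj_split Eu.
have [v'' [Hv1 Hv2 Hv3]] := fg_conj_split Ev.
rewrite Hu2 Hv2; apply: dependentJ; apply: IHn.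
  have H2u : 2 <= size u by rewrite Eu /= size_rcons.
  have H2v : 2 <= size v by rewrite Ev /= size_rcons.
  rewrite Hu1 Hv1 Hu3 Hv3; move: Hn H2u H2v; move: (size u) (size v) => a b; lia.
by apply: (conjg_inj (fgred [:: linv x])); rewrite !conjMg -Hu2 -Hv2.
Qed.

(* Without shortening, either [u v = v u] holds letterwise, or [u] and [v] both
   begin with the same letter [x] and end with [x^-1]. *)
Lemma dependent_of_unshortened u v : size u + size v <= n.+1 -> commute u v ->
  val u != [::] -> val v != [::] -> size u <= size (u * v) -> size v <= size (u * v) ->
  dependent u v.
Proof.
move=> Hn C Hu0 Hv0 Lu Lv.
have [s [u1 [v1 [E1 E2 E3]]]] := red_split (fgP u) (fgP v).
have [t [v2 [u2 [F1 F2 F3]]]] := red_split (fgP v) (fgP u).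
have {}E3 : val (u * v) = u1 ++ v1 by [].
have {}F3 : val (u * v) = v2 ++ u2 by rewrite C.
have Su : size u = size u1 + size s by rewrite E1 size_cat addnC.
have Sv : size v = size s + size v1 by rewrite E2 size_cat size_winv.
have Su' : size u = size t + size u2 by rewrite F2 size_cat size_winv.
have Sv' : size v = size v2 + size t by rewrite F1 size_cat addnC.
have SL : size (u * v) = size u1 + size v1 by rewrite E3 size_cat.
have SL' : size (u * v) = size v2 + size u2 by rewrite F3 size_cat.
case/lastP: s E1 E2 E3 Su Sv => [|s z] E1 E2 E3 Su Sv.
  have Ht : t = [::].
    apply/eqP; rewrite -size_eq0; move: Su Sv Su' Sv' SL SL' => /=.
    move: (size u) (size v) (size (u * v)) => a b c; lia.
  rewrite Ht /= in F1 F2; rewrite cats0 in F1; rewrite cats0 in E1; rewrite /= in E2.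
  have Ecat : val u ++ val v = val v ++ val u.
    by rewrite /= {1}E1 {1}E2 -E3 F3 -F1 -F2.
  have [Suv|Suv] := leqP (size u) (size v); first exact: dependent_of_cat_commute.
  apply: dependent_sym => //; apply: dependent_of_cat_commute.
  - by rewrite addnC.
  - exact: commute_sym.
  - exact: Hv0.
  - by rewrite Ecat.
  - exact: ltnW.
have Sst : size (rcons s z) = size t.
  move: Su Sv Su' Sv' SL SL'.
  move: (size u) (size v) (size (u * v)) => a b c; lia.
case/lastP: t Sst F1 F2 F3 Su' Sv' SL' => [|t z'] Sst F1 F2 F3 Su' Sv' SL'.
  by rewrite size_rcons in Sst.
case: u1 E1 E3 Su SL => [|x u1] E1 E3 Su SL.
  move: Su SL Lv Sv; rewrite size_rcons /=.
  move: (size u) (size v) (size (u * v)) => a b c; lia.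
case: v2 F1 F3 Sv' SL' => [|y v2] F1 F3 Sv' SL'.
  move: Su' SL' Lu Sst; rewrite !size_rcons /=.
  move: (size u) (size v) (size (u * v)) => a b c; lia.
have Exy : x = y by have := E3; rewrite F3 => -[].
subst y.
have Ez : z = linv x by have := E2; rewrite winv_rcons F1 => -[] ->; rewrite linvK.
have Ez' : z' = linv x by have := F2; rewrite winv_rcons E1 => -[] Hx _; rewrite Hx linvK.
subst z z'.
apply: (@dependent_of_conj_split _ _ x (u1 ++ s) (v2 ++ t)) => //.
  by rewrite /= E1 rcons_cat.
by rewrite /= F1 rcons_cat.
Qed.

Lemma dependent_free_step u v : size u + size v <= n.+1 -> commute u v ->
  dependent u v.
Proof.
move=> Hn C.
have [Hu0|Hu0] := eqVneq (val u) [::]; first by rewrite (fg1P Hu0); apply: dependent1x.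
have [Hv0|Hv0] := eqVneq (val v) [::]; first by rewrite (fg1P Hv0); apply: dependentx1.
have Su0 : 0 < size u by rewrite lt0n size_eq0.
have Sv0 : 0 < size v by rewrite lt0n size_eq0.
have [Lv|Lv] := ltnP (size (u * v)) (size v).
  apply: dependent_of_mulr => //; apply: IHn; last exact: commuteM.
  move: Hn Lv Su0; move: (size u) (size v) (size (u * v)) => a b c; lia.
have [Lu|Lu] := ltnP (size (u * v)) (size u); last exact: dependent_of_unshortened.
apply: dependent_sym; first exact: commute_sym.
apply: dependent_of_mulr; first exact: commute_sym.
rewrite -C; apply: IHn; last by apply: commuteM => //; apply: commute_sym.
move: Hn Lu Sv0; move: (size u) (size v) (size (v * u)) => a b c; lia.
Qed.
End FreeCentralizers.

Theorem free_commute_dependent (X : choiceType) (u v : fg X) :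
  commute u v -> dependent u v.
Proof.
elim: {u v}(size u + size v) {-2}u {-2}v (leqnn (size u + size v)) => [|n IHn] u v Hn C.
  by move: Hn; rewrite leqn0 addn_eq0 !size_eq0 => /andP[/eqP/fg1P -> _]; apply: dependent1x.
exact: dependent_free_step IHn _ _ Hn C.
Qed.

(** * Right-angled Artin groups *)

Section RaagEq.
Variable T : eqType.
Variable e : rel T.
Hypothesis e_sym : symmetric e.
Notation req := (raag_eq e).

Lemma req_refl w : req w w. Proof. exact: rst_refl. Qed.
Lemma req_sym u v : req u v -> req v u. Proof. exact: rst_sym. Qed.
Lemma req_trans u v w : req u v -> req v w -> req u w. Proof. exact: rst_trans. Qed.
Lemma req_step u v : raag_step e u v -> req u v. Proof. exact: rst_step. Qed.

Lemma raag_step_cat p s u v : raag_step e u v -> raag_step e (p ++ u ++ s) (p ++ v ++ s).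
Proof.
case=> [u1 v1 x b|u1 v1 x y b c H].
  have -> : p ++ (u1 ++ [:: (x, b); (x, ~~ b)] ++ v1) ++ s =
          (p ++ u1) ++ [:: (x, b); (x, ~~ b)] ++ (v1 ++ s) by rewrite !catA.
  have -> : p ++ (u1 ++ v1) ++ s = (p ++ u1) ++ (v1 ++ s) by rewrite !catA.
  exact: raag_cancel.
rewrite -!catA.
have -> : p ++ u1 ++ [:: (x, b); (y, c)] ++ v1 ++ s =
          (p ++ u1) ++ [:: (x, b); (y, c)] ++ (v1 ++ s) by rewrite !catA.
have -> : p ++ u1 ++ [:: (y, c); (x, b)] ++ v1 ++ s =
          (p ++ u1) ++ [:: (y, c); (x, b)] ++ (v1 ++ s) by rewrite !catA.
exact: raag_comm.
Qed.

Lemma req_ctx p s u v : req u v -> req (p ++ u ++ s) (p ++ v ++ s).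
Proof.
elim=> [a b H|a|a b _ IH|a b c _ IH1 _ IH2].
- by apply: req_step; apply: raag_step_cat.
- exact: req_refl.
- exact: req_sym.
- exact: req_trans IH2.
Qed.

Lemma req_cat u u' v v' : req u u' -> req v v' -> req (u ++ v) (u' ++ v').
Proof.
move=> H1 H2; apply: (req_trans (v := u' ++ v)).
  by have := req_ctx [::] v H1; rewrite /= .
by have := req_ctx u' [::] H2; rewrite !cats0.
Qed.

Lemma req_cancel u v l : req (u ++ [:: l; linv l] ++ v) (u ++ v).
Proof. by case: l => x b; apply: req_step; apply: raag_cancel. Qed.

Lemma req_red w : req w (red w).
Proof.
elim: w => [|l w IH] /=; first exact: req_refl.
apply: (req_trans (v := l :: red w)).
  by have := req_ctx [:: l] [::] IH; rewrite !cats0.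
have := red_reduced w; case: (red w) => [|l' r] _ /=; first exact: req_refl.
case: eqP => [->|_]; last exact: req_refl.
by have := req_cancel [::] r l.
Qed.

Lemma req_red_nil w : red w = [::] -> req w [::].
Proof. by move=> H; rewrite -H; apply: req_red. Qed.

Lemma winv_pair (l1 l2 : T * bool) : winv [:: l1; l2] = [:: linv l2; linv l1].
Proof. by []. Qed.

Lemma req_inv u v : req u v -> req (inv_word u) (inv_word v).
Proof.
elim=> [a b H|a|a b _ IH|a b c _ IH1 _ IH2].
- apply: req_step; rewrite /inv_word -!/(winv _); case: H => [u1 v1 x b0|u1 v1 x y b0 c H].
    rewrite !winv_cat winv_pair /linv /= negbK -catA.
    exact: raag_cancel.
  rewrite !winv_cat !winv_pair /linv /= -!catA.
  by apply: raag_comm; rewrite e_sym.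
- exact: req_refl.
- exact: req_sym IH.
- exact: req_trans IH1 IH2.
Qed.
End RaagEq.

Lemma hom_ext_cons (L G : Type) (f : L -> raag_word G) l w :
  hom_ext f (l :: w) = (if l.2 then f l.1 else inv_word (f l.1)) ++ hom_ext f w.
Proof. by []. Qed.

Lemma all_hom_ext (L T : Type) (S : pred T) (f : L -> raag_word T) w :
  (forall v, all (fun l => S l.1) (f v)) -> all (fun l => S l.1) (hom_ext f w).
Proof.
move=> H; elim: w => [|l w IH] //=; rewrite hom_ext_cons all_cat IH andbT.
by case: l.2 => //; rewrite /inv_word all_rev all_map; apply: H.
Qed.

Lemma req_hom_ext (L : Type) (T : eqType) (e : rel T) (esym : symmetric e)
  (f g : L -> raag_word T) w :
  (forall v, raag_eq e (f v) (g v)) -> raag_eq e (hom_ext f w) (hom_ext g w).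
Proof.
move=> H; elim: w => [|l w IH]; first exact: req_refl.
rewrite !hom_ext_cons; apply: req_cat => //.
by case: l.2; [apply: H | apply: req_inv => //; apply: H].
Qed.

Section AnticliqueProjection.
Variable T : eqType.
Variable e : rel T.
Variable Q : pred T.
Hypothesis Q_anticlique : forall y z, Q y -> Q z -> ~~ e y z.
Notation proj := (filter (fun l : T * bool => Q l.1)).

Lemma red_filter_raag_eq u v : raag_eq e u v -> red (proj u) = red (proj v).
Proof.
elim=> [a b H|a|a b _ IH|a b c _ IH1 _ IH2] //; last by rewrite IH1.
case: H => [u1 v1 x b0|u1 v1 x y b0 c H].
  rewrite !filter_cat /=; case: (Q x) => //.
  by have := red_cancel (proj u1) (proj v1) (x, b0).
rewrite !filter_cat /=.
case Qx: (Q x); case Qy: (Q y) => //.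
by have := Q_anticlique Qx Qy; rewrite H.
Qed.
End AnticliqueProjection.

Section CoclassDecomposition.
Variable T : eqType.
Variable e : rel T.
Hypothesis e_sym : symmetric e.
Hypothesis e_irr : irreflexive e.
Notation req := (raag_eq e).

Lemma req_move_past (l : T * bool) A B : all (fun a => e l.1 a.1) A ->
  req (l :: A ++ B) (A ++ l :: B).
Proof.
elim: A => [|a A IH] /=; first by move=> _; apply: req_refl.
case/andP=> Ha HA; apply: (req_trans (v := a :: l :: A ++ B)).
  apply: req_step; case: l Ha {IH HA} => x b; case: a => y c /= H.
  by have := @raag_comm _ e [::] (A ++ B) x y b c H.
by have := req_ctx [:: a] [::] (IH HA); rewrite !cats0.
Qed.

Lemma req_partition (Q : pred T) (w : raag_word T) :
  (forall l1 l2, l1 \in w -> l2 \in w -> Q l1.1 -> ~~ Q l2.1 -> e l1.1 l2.1) ->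
  req w (filter (fun l => Q l.1) w ++ filter (fun l => ~~ Q l.1) w).
Proof.
elim: w => [|l w IH] H /=; first exact: req_refl.
have IH' : req w ([seq l <- w | Q l.1] ++ [seq l <- w | ~~ Q l.1]).
  by apply: IH => l1 l2 H1 H2; apply: H; rewrite inE ?H1 ?H2 orbT.
case: ifP => Ql /=.
  by have := req_ctx [:: l] [::] IH'; rewrite !cats0.
apply: (req_trans (v := l :: filter (fun l => Q l.1) w ++ filter (fun l => ~~ Q l.1) w)).
  by have := req_ctx [:: l] [::] IH'; rewrite !cats0.
apply: req_move_past; apply/allP => a; rewrite mem_filter => /andP[Qa aw].
rewrite e_sym; apply: H => //; first by rewrite inE aw orbT.
  by rewrite inE eqxx.
by rewrite Ql.
Qed.

Variable S : pred T.
Hypothesis S_cotransitive :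
  forall x y z, S x -> S y -> S z -> ~~ e x y -> ~~ e y z -> ~~ e x z.

Definition coclass x := fun y => S y && ~~ e x y.

Lemma coclass_anticlique x : S x -> forall y z, coclass x y -> coclass x z -> ~~ e y z.
Proof.
move=> Sx y z /andP[Sy Hy] /andP[Sz Hz].
by apply: (S_cotransitive Sy Sx Sz) => //; rewrite e_sym.
Qed.

(* When non-adjacency is transitive on [S], the letters of [S] generate the direct
   product of the free groups on the classes [coclass x]. *)
Lemma raag_eq_nil_of_coclass (w : raag_word T) : all (fun l => S l.1) w ->
  (forall x, S x -> red (filter (fun l => coclass x l.1) w) = [::]) -> req w [::].
Proof.
elim: {w}(size w) {-2}w (leqnn (size w)) => [|n IH] w Hn HS Hred.
  by case: w Hn HS Hred => // _ _ _; apply: req_refl.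
case: w Hn HS Hred => [|l w'] Hn HS Hred; first exact: req_refl.
set w := l :: w' in Hn HS Hred *.
set x := l.1.
have Sx : S x by move: HS => /= /andP[].
have HSw : forall l', l' \in w -> S l'.1 by move=> l'; move/allP: HS; apply.
apply: (req_trans (req_partition (Q := coclass x) _)).
  move=> l1 l2 H1 H2; rewrite /coclass HSw //= => Q1 Q2.
  rewrite (HSw _ H2) /= negbK in Q2; apply/negPn/negP => N.
  by have := S_cotransitive Sx (HSw _ H1) (HSw _ H2) Q1 N; rewrite Q2.
rewrite -[[::]]/([::] ++ [::]); apply: req_cat.
  by apply: req_red_nil; apply: Hred.
apply: IH.
- rewrite /w /= /coclass Sx e_irr /=.
  rewrite size_filter; apply: leq_trans (count_size _ _) _; exact: Hn.
- by apply/allP => l'; rewrite mem_filter => /andP[_ H]; apply: HSw.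
- move=> y Sy; rewrite -filter_predI.
  case Exy: (e x y).
  + rewrite -(Hred y Sy); congr red; apply: eq_filter => l' /=.
    rewrite /coclass; case Sl: (S l'.1) => //=.
    case Eyl: (e y l'.1) => //=; rewrite negbK.
    apply/negPn/negP => N; have H2 : ~~ e l'.1 y by rewrite e_sym Eyl.
    by have := S_cotransitive Sx Sl Sy N H2; rewrite Exy.
  + rewrite (@eq_in_filter _ _ pred0) ?filter_pred0 // => l' _ /=.
    rewrite /coclass; case Sl: (S l'.1) => //=.
    case Eyl: (e y l'.1) => //=.
    by have := S_cotransitive Sx Sy Sl; rewrite Exy Eyl => /(_ isT isT) ->.
Qed.
End CoclassDecomposition.

Section Geval.
Local Open Scope group_scope.
Variable L : Type.
Variable G : groupType.
Variable g : L -> G.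
Definition lval (l : L * bool) := if l.2 then g l.1 else (g l.1)^-1.
Definition geval (w : raag_word L) := foldr (fun l acc => lval l * acc) 1 w.

Lemma geval_cat u v : geval (u ++ v) = geval u * geval v.
Proof. by elim: u => [|l u IH] /=; rewrite ?mul1g // IH mulgA. Qed.

Lemma inv_word_cons (l : L * bool) u : inv_word (l :: u) = inv_word u ++ [:: (l.1, ~~ l.2)].
Proof. by rewrite /inv_word /= rev_cons cats1. Qed.

Lemma geval_inv u : geval (inv_word u) = (geval u)^-1.
Proof.
elim: u => [|l u IH]; first by rewrite /= invg1.
rewrite inv_word_cons geval_cat IH /= invgM mulg1.
by congr (_ * _); case: l => x [] /=; rewrite ?invgK.
Qed.

Lemma geval_nseqT v n : geval (nseq n (v, true)) = g v ^+ n.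
Proof. by elim: n => [|n IH] //=; rewrite IH -expgS. Qed.
Lemma geval_nseqF v n : geval (nseq n (v, false)) = (g v)^-1 ^+ n.
Proof. by elim: n => [|n IH] //=; rewrite IH -expgS. Qed.

Variable eL : rel L.
Hypothesis gcomm : forall x y, eL x y -> commute (g x) (g y).

Lemma geval_req u v : raag_eq eL u v -> geval u = geval v.
Proof.
elim=> [a b H|a|a b _ IH|a b c _ IH1 _ IH2] //; last by rewrite IH1.
case: H => [u1 v1 x b0|u1 v1 x y b0 c H].
  rewrite !geval_cat /= mulg1; congr (_ * _).
  by case: b0; rewrite /lval /= ?mulgV ?mulVg mul1g.
rewrite !geval_cat; congr (_ * _); rewrite /= !mulgA; congr (_ * _).
have C := gcomm H.
by case: b0; case: c; rewrite /lval /= !mulg1;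
  repeat first [apply: commuteV | (apply: commute_sym; apply: commuteV)]; apply: commute_sym.
Qed.
End Geval.

Lemma geval_hom_ext (L M : Type) (G : groupType) (f : L -> raag_word M) (g : M -> G) w :
  geval g (hom_ext f w) = geval (fun v => geval g (f v)) w.
Proof.
elim: w => [|l w IH] //=; rewrite hom_ext_cons geval_cat IH; congr (_ * _)%g.
by case: l => v [] //=; rewrite geval_inv.
Qed.

Section FreeProjection.
Local Open Scope group_scope.
Variable T : choiceType.
Variable Q : pred T.
Definition fgproj (w : raag_word T) : fg T := fgred (filter (fun l => Q l.1) w).

Lemma fgproj_geval w :
  fgproj w = geval (fun x => if Q x then fgred [:: (x, true)] else 1) w.
Proof.
elim: w => [|l w IH] /=; first by rewrite /fgproj fgred1.
rewrite -IH /fgproj /lval /=; case: l => x b /=; case: (Q x) => /=; last first.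
  by case: b; rewrite ?invg1 mul1g.
rewrite -cat1s fgredM; congr (_ * _); case: b => //=.
Qed.
End FreeProjection.

(** * A test word in A(P3^c) *)

Definition v1 : 'I_3 := @Ordinal 3 0 isT.
Definition v2 : 'I_3 := @Ordinal 3 1 isT.
Definition v3 : 'I_3 := @Ordinal 3 2 isT.

Definition wpow (v : 'I_3) (z : int) : raag_word 'I_3 :=
  match z with Posz n => nseq n (v, true) | Negz n => nseq n.+1 (v, false) end.
Definition conj_word (k : nat) (pq : int * int) : raag_word 'I_3 :=
  nseq k (v2, true) ++ wpow v1 pq.1 ++ wpow v3 pq.2 ++ nseq k (v2, false).
Definition comm_word (u v : raag_word 'I_3) := u ++ v ++ inv_word u ++ inv_word v.
Fixpoint nest_comm (acc : raag_word 'I_3) (k : nat) (L : seq (int * int)) :=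
  if L is pq :: L' then nest_comm (comm_word acc (conj_word k pq)) k.+1 L' else acc.

Definition test_word (L : seq (int * int)) := nest_comm [:: (v1, true)] 1 L.

Section TestWordKilled.
Local Open Scope group_scope.
Variables (G : groupType) (g : 'I_3 -> G).
Notation ge := (geval g).

Lemma geval_wpow v z : ge (wpow v z) = expgz (g v) z.
Proof.
case: z => n; first exact: geval_nseqT.
by have := geval_nseqF g v n.+1; rewrite expVgn.
Qed.

Lemma geval_conj_word k pq : ge (conj_word k pq) =
  g v2 ^+ k * (expgz (g v1) pq.1 * expgz (g v3) pq.2) * (g v2)^-1 ^+ k.
Proof. by rewrite /conj_word !geval_cat geval_nseqT geval_nseqF !geval_wpow !mulgA. Qed.

Lemma geval_comm_word u v : ge (comm_word u v) = ge u * ge v * (ge u)^-1 * (ge v)^-1.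
Proof. by rewrite /comm_word !geval_cat !geval_inv !mulgA. Qed.

Lemma geval_nest_comm1 acc k L : ge acc = 1 -> ge (nest_comm acc k L) = 1.
Proof.
elim: L acc k => [|pq L IH] acc k //= Hacc; apply: IH.
by rewrite geval_comm_word Hacc !mul1g invg1 mulg1 mulgV.
Qed.

Lemma geval_nest_comm_rel acc k L :
  (exists2 pq, pq \in L & expgz (g v1) pq.1 * expgz (g v3) pq.2 = 1) ->
  ge (nest_comm acc k L) = 1.
Proof.
elim: L acc k => [|pq L IH] acc k [pq' //]; rewrite inE => /orP[/eqP-> E|Hin E] /=.
  apply: geval_nest_comm1; rewrite geval_comm_word geval_conj_word E mulg1.
  rewrite -expgMn; last exact/commuteV/commute_refl.
  by rewrite mulgV expg1n mulg1 invg1 mulg1 mulgV.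
by apply: IH; exists pq'.
Qed.
End TestWordKilled.

(** * An integral representation of A(P3^c) *)

Section ElementaryMatrices.
Import GRing.Theory.
Local Open Scope ring_scope.
Variable n : nat.
Notation N := n.+1.
Notation M := 'M[int]_N.
Implicit Types i j k l : 'I_N.

Definition elem_mx (x : int) i j : M := 1%:M + x *: delta_mx i j.

Lemma mul_elem_mx x y i j : i != j -> elem_mx x i j *m elem_mx y i j = elem_mx (x + y) i j.
Proof.
move=> Hij; rewrite /elem_mx mulmxDl !mulmxDr -!scalemxAl -!scalemxAr !mul1mx !mulmx1.
rewrite mul_delta_mx_0 1?eq_sym // !scaler0 addr0 scalerDl.
by rewrite -addrA [y *: _ + _]addrC addrA.
Qed.

Lemma elem_mx0 i j : elem_mx 0 i j = 1%:M.
Proof. by rewrite /elem_mx scale0r addr0. Qed.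

Lemma elem_mx_unit x i j : i != j -> elem_mx x i j \in unitmx.
Proof.
by move=> H; have := mul_elem_mx x (- x) H; rewrite subrr elem_mx0 => /mulmx1_unit[].
Qed.

Lemma elem_mx_commutator x y i k l : i != k -> k != l -> i != l ->
  elem_mx x i k *m elem_mx y k l = elem_mx (x * y) i l *m elem_mx y k l *m elem_mx x i k.
Proof.
move=> Hik Hkl Hil.
rewrite /elem_mx !mulmxDl !mulmxDr -!scalemxAl -!scalemxAr !mul1mx !mulmx1.
rewrite ?mulmxDl -?scalemxAl ?mul1mx mul_delta_mx.
rewrite !mul_delta_mx_0 1?(eq_sym l) // ?mul0mx !scaler0 !addr0 scalerA.
by rewrite scaler0 addr0 !addrA.
Qed.

Definition shift_mx : M := \sum_(c < N) delta_mx (ordS c) c.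
Definition unshift_mx : M := \sum_(r < N) delta_mx r (ordS r).

Lemma mul_shift_delta_mx i j : shift_mx *m delta_mx i j = delta_mx (ordS i) j.
Proof.
rewrite /shift_mx mulmx_suml.
under eq_bigr => c _ do rewrite mul_delta_mx_cond mulrb.
by rewrite -big_mkcond big_pred1_eq.
Qed.

Lemma mul_delta_unshift_mx i j : delta_mx i j *m unshift_mx = delta_mx i (ordS j).
Proof.
rewrite /unshift_mx mulmx_sumr.
under eq_bigr => c _ do rewrite mul_delta_mx_cond eq_sym mulrb.
by rewrite -big_mkcond big_pred1_eq.
Qed.

Lemma mul_shift_unshift_mx : shift_mx *m unshift_mx = 1%:M.
Proof.
rewrite {1}/shift_mx mulmx_suml.
under eq_bigr => c _ do rewrite mul_delta_unshift_mx.
by rewrite mx1_sum_delta [RHS](reindex_inj (@ordS_inj N)).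
Qed.

Lemma shift_elem_mx x i j :
  shift_mx *m elem_mx x i j *m unshift_mx = elem_mx x (ordS i) (ordS j).
Proof.
rewrite /elem_mx mulmxDr mulmxDl mulmx1 mul_shift_unshift_mx.
by rewrite -scalemxAr -scalemxAl mul_shift_delta_mx mul_delta_unshift_mx.
Qed.
End ElementaryMatrices.

Section IntegralGL.
Import GRing.Theory.
Variable n : nat.
Notation N := n.+1.
Notation M := 'M[int]_N.
Implicit Types i j k l : 'I_N.

Record glz := GLZ { gmx : M; gmxP : gmx \in unitmx }.
HB.instance Definition _ := [isSub for gmx].
HB.instance Definition _ := [Choice of glz by <:].

Local Open Scope ring_scope.
Lemma gl_mul_subproof (A B : glz) : gmx A *m gmx B \in unitmx.
Proof. by rewrite unitmx_mul !gmxP. Qed.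
Lemma gl_inv_subproof (A : glz) : invmx (gmx A) \in unitmx.
Proof. by rewrite unitmx_inv gmxP. Qed.
Definition gl_one : glz := GLZ (unitmx1 int N).
Definition gl_mul (A B : glz) : glz := GLZ (gl_mul_subproof A B).
Definition gl_inv (A : glz) : glz := GLZ (gl_inv_subproof A).
Local Close Scope ring_scope.

Lemma gl_mulA : associative gl_mul.
Proof. by move=> A B C; apply: val_inj; rewrite /= mulmxA. Qed.
Lemma gl_mul1 : left_id gl_one gl_mul.
Proof. by move=> A; apply: val_inj; rewrite /= mul1mx. Qed.
Lemma gl_mulg1 : right_id gl_one gl_mul.
Proof. by move=> A; apply: val_inj; rewrite /= mulmx1. Qed.
Lemma gl_mulV : left_inverse gl_one gl_inv gl_mul.
Proof. by move=> A; apply: val_inj; rewrite /= mulVmx // gmxP. Qed.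
Lemma gl_mulgV : right_inverse gl_one gl_inv gl_mul.
Proof. by move=> A; apply: val_inj; rewrite /= mulmxV // gmxP. Qed.

HB.instance Definition _ :=
  isGroup.Build glz gl_mulA gl_mul1 gl_mulg1 gl_mulV gl_mulgV.

Local Open Scope group_scope.

Lemma val_gl_mul (A B : glz) : val (A * B) = (val A *m val B)%R. Proof. by []. Qed.

Definition elem_gl (x : int) i j : glz := insubd (1 : glz) (elem_mx x i j).

Lemma val_elem_gl x i j : i != j -> val (elem_gl x i j) = elem_mx x i j.
Proof. by move=> H; rewrite /elem_gl insubdK // unfold_in /=; apply: elem_mx_unit. Qed.

Lemma elem_glM x y i j : i != j -> elem_gl x i j * elem_gl y i j = elem_gl (x + y)%R i j.
Proof. by move=> H; apply: val_inj; rewrite val_gl_mul !val_elem_gl // mul_elem_mx. Qed.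

Lemma elem_gl0 i j : i != j -> elem_gl 0 i j = 1.
Proof. by move=> H; apply: val_inj; rewrite val_elem_gl // elem_mx0. Qed.

Lemma elem_glV x i j : i != j -> (elem_gl x i j)^-1 = elem_gl (- x)%R i j.
Proof.
move=> H; apply: (mulgI (elem_gl x i j)).
by rewrite mulgV elem_glM // GRing.subrr elem_gl0.
Qed.

Lemma elem_glX x i j (m : nat) : i != j -> elem_gl x i j ^+ m = elem_gl (x *+ m)%R i j.
Proof.
move=> H; elim: m => [|m IH]; first by rewrite expg0 GRing.mulr0n elem_gl0.
by rewrite expgS IH elem_glM // GRing.mulrS.
Qed.

Lemma expgz_elem_gl x i j (p : int) : i != j ->
  expgz (elem_gl x i j) p = elem_gl (p * x)%R i j.
Proof.
move=> H; case: p => m /=; first by rewrite elem_glX // -natz GRing.mulr_natl.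
rewrite elem_glX // elem_glV //; congr elem_gl.
by rewrite NegzE -natz GRing.mulNr GRing.mulr_natl.
Qed.

Lemma elem_gl_commutator x y i k l : i != k -> k != l -> i != l ->
  elem_gl x i k * elem_gl y k l * (elem_gl x i k)^-1 * (elem_gl y k l)^-1 =
  elem_gl (x * y)%R i l.
Proof.
move=> Hik Hkl Hil.
have -> : elem_gl x i k * elem_gl y k l =
          elem_gl (x * y)%R i l * elem_gl y k l * elem_gl x i k.
  by apply: val_inj; rewrite !val_gl_mul !val_elem_gl // elem_mx_commutator.
by rewrite !mulgK.
Qed.

Lemma elem_gl_neq1 (x : int) i j : i != j -> (x != 0)%R -> elem_gl x i j != 1.
Proof.
move=> Hij Hx; apply/eqP => /(congr1 val); rewrite val_elem_gl // => /matrixP/(_ i j).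
by rewrite !mxE !eqxx (negbTE Hij) /= GRing.mulr1 GRing.add0r => /eqP; apply/negP.
Qed.

Lemma shift_mx_unit : shift_mx n \in unitmx.
Proof. by case: (mulmx1_unit (mul_shift_unshift_mx n)). Qed.
Lemma unshift_mx_unit : unshift_mx n \in unitmx.
Proof. by case: (mulmx1_unit (mul_shift_unshift_mx n)). Qed.
Definition shift_gl : glz := GLZ shift_mx_unit.
Definition unshift_gl : glz := GLZ unshift_mx_unit.

Lemma shift_glV : shift_gl^-1 = unshift_gl.
Proof. by apply: mulg1_eq; apply: val_inj; rewrite val_gl_mul /= mul_shift_unshift_mx. Qed.

Lemma shift_gl_conj x i j : i != j ->
  shift_gl * elem_gl x i j * shift_gl^-1 = elem_gl x (ordS i) (ordS j).
Proof.
move=> H; have H' : ordS i != ordS j by rewrite (inj_eq (@ordS_inj N)).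
by apply: val_inj; rewrite shift_glV !val_gl_mul !val_elem_gl //= shift_elem_mx.
Qed.

Lemma shift_gl_conjX x i j (m : nat) : i != j ->
  shift_gl ^+ m * elem_gl x i j * shift_gl^-1 ^+ m =
  elem_gl x (iter m (@ordS N) i) (iter m (@ordS N) j).
Proof.
move=> H; elim: m => [|m IH]; first by rewrite !expg0 mul1g mulg1.
rewrite expgS expgSr -!mulgA (mulgA (shift_gl ^+ m)) (mulgA (shift_gl ^+ m * _)) IH.
rewrite /= mulgA shift_gl_conj //.
by elim: m {IH} => [|m IHm] //=; rewrite (inj_eq (@ordS_inj N)).
Qed.
End IntegralGL.

Section TestWordRepresentation.
Local Open Scope group_scope.
Variable n : nat.
Hypothesis n_gt0 : 0 < n.
Notation N := n.+1.
Variables (al be : int).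

Lemma iter_ordS a m : a + m < N -> iter m (@ordS N) (inord a) = inord (a + m).
Proof.
elim: m => [|m IH] Hm /=; first by rewrite addn0.
rewrite IH; last by move: Hm; lia.
apply: val_inj; rewrite /= !inordK ?addnS //; last by move: Hm; lia.
  by rewrite modn_small //; move: Hm; lia.
by move: Hm; lia.
Qed.

Lemma inord_neq a b : a < N -> b < N -> a != b -> (inord a : 'I_N) != inord b.
Proof. by move=> Ha Hb; apply: contra => /eqP /(congr1 val); rewrite /= !inordK // => ->. Qed.

Lemma inord01 : (inord 0 : 'I_N) != inord 1.
Proof. exact: inord_neq. Qed.

(* v2^k conjugates v1, v3 to elementary matrices at (k, k+1), and the commutator
   of E_{0,k}(c) and E_{k,k+1}(d) is E_{0,k+1}(c d). *)
Definition P3c_rep (v : 'I_3) : glz n :=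
  if val v == 1%N then shift_gl n
  else elem_gl (if val v == 0%N then al else be) (inord 0) (inord 1).

Lemma P3c_rep_commute x y : P3c x y -> commute (P3c_rep x) (P3c_rep y).
Proof.
rewrite /P3c /P3c_rep => /orP[] /andP[/eqP -> /eqP ->] /=;
  by rewrite /commute !elem_glM ?inord01 // GRing.addrC.
Qed.

Lemma geval_rep_conj_word k pq : k.+1 < N ->
  geval P3c_rep (conj_word k pq) =
  elem_gl (pq.1 * al + pq.2 * be)%R (inord k) (inord k.+1).
Proof.
move=> Hk; rewrite geval_conj_word /P3c_rep /= !expgz_elem_gl ?inord01 //.
rewrite elem_glM ?inord01 // shift_gl_conjX ?inord01 // !iter_ordS //.
by move: Hk; lia.
Qed.

Lemma geval_rep_nest_comm (L : seq (int * int)) acc k c : 0 < k -> k + size L < N ->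
  geval P3c_rep acc = elem_gl c (inord 0) (inord k) ->
  geval P3c_rep (nest_comm acc k L) =
    elem_gl (c * \prod_(pq <- L) (pq.1 * al + pq.2 * be))%R (inord 0) (inord (k + size L)).
Proof.
elim: L acc k c => [|pq L IH] acc k c Hk HkL Hacc /=.
  by rewrite big_nil GRing.mulr1 addn0.
rewrite big_cons GRing.mulrA addnS -addSn; apply: IH => //.
  by move: HkL => /=; lia.
rewrite geval_comm_word Hacc geval_rep_conj_word; last by move: HkL => /=; lia.
by apply: elem_gl_commutator; apply: inord_neq => //; move: HkL => /=; lia.
Qed.
End TestWordRepresentation.

Lemma sum_abs_snd_ge (L : seq (int * int)) pq : pq \in L ->
  (`|pq.2| <= \sum_(x <- L) `|x.2|)%N.
Proof.
elim: L => [|a L IH] //; rewrite inE big_cons => /orP[/eqP ->|H].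
  exact: leq_addr.
by apply: leq_trans (IH H) _; apply: leq_addl.
Qed.

Lemma lincomb_neq0 (p q : int) (s : nat) : (`|q| <= s)%N -> (p, q) != (0%R, 0%R) ->
  (p * (1 + s)%:Z + q != 0)%R.
Proof.
move=> Hq Hpq; apply/eqP => E.
have [Hp|Hp] := eqVneq p 0%R.
  by move: Hpq; rewrite Hp xpair_eqE eqxx /=; apply/negP; apply/eqP; lia.
have : (1 <= p)%R \/ (p <= -1)%R by lia.
case=> Hp'; nia.
Qed.

Lemma test_word_nontrivial (L : seq (int * int)) : (forall pq, pq \in L -> pq != (0%R, 0%R)) ->
  ~ raag_eq P3c (test_word L) [::].
Proof.
move=> L_nz W1.
(* Each factor p * al + q of the resulting entry vanishes only if p = q = 0. *)
pose al : int := (1 + \sum_(pq <- L) `|pq.2|)%N.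
have := geval_req (@P3c_rep_commute (size L).+1 isT al 1) W1.
rewrite /test_word (@geval_rep_nest_comm (size L).+1 isT al 1 L _ 1 al) //=; last first.
  by rewrite mulg1.
apply/eqP.
apply: elem_gl_neq1; first by apply: inord_neq; rewrite ?add1n.
rewrite GRing.mulf_neq0 // GRing.prodf_seq_neq0; apply/allP => -[p q] Hpq /=.
by rewrite GRing.mulr1; apply: lincomb_neq0 (sum_abs_snd_ge Hpq) (L_nz _ Hpq).
Qed.

Lemma raag_hom_congr (L : Type) (T : eqType) (eL : rel L) (e : rel T)
    (f g : L -> raag_word T) :
  symmetric e -> (forall v, raag_eq e (g v) (f v)) ->
  is_raag_hom eL e f -> raag_hom_injective eL e f ->
  is_raag_hom eL e g /\ raag_hom_injective eL e g.
Proof.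
move=> e_sym gf f_hom f_inj; split=> [u v /f_hom uv | w1 w2 E].
  apply: req_trans (req_cat (gf u) (gf v)) _; apply: req_trans uv _.
  by apply: req_cat; apply: req_sym.
apply: f_inj; apply: req_trans (req_trans _ E) _; apply: req_hom_ext => // v.
exact: req_sym.
Qed.

Lemma exists_shortest (A : Type) (R : seq A -> Prop) w0 : R w0 ->
  exists2 w, R w & forall w', R w' -> size w <= size w'.
Proof.
elim: {w0}(size w0) {-2}w0 (leqnn (size w0)) => [|n IH] w0 Hn Hw0.
  by exists w0 => // w' _; move: Hn; rewrite leqn0 => /eqP ->.
case: (classic (exists2 w', R w' & size w' < size w0)) => [[w' Hw' Hs]|Hno].
  by apply: (IH w') => //; move: Hn Hs; lia.
exists w0 => // w' Hw'; rewrite leqNgt; apply/negP => Hs; apply: Hno.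
by exists w'.
Qed.

Lemma shortest_representatives (L : finType) (T : eqType) (e : rel T)
    (f : L -> raag_word T) :
  exists2 g : L -> raag_word T, forall v, raag_eq e (g v) (f v) &
    forall v w, raag_eq e w (f v) -> size (g v) <= size w.
Proof.
have /fin_all_exists2[g g_eq g_min] : forall v, exists2 w, raag_eq e w (f v) &
    forall w', raag_eq e w' (f v) -> size w <= size w'.
  move=> v; apply: (@exists_shortest _ (fun w => raag_eq e w (f v)) (f v)).
  exact: req_refl.
by exists g.
Qed.

Lemma I3_cases (v : 'I_3) : [\/ v = v1, v = v2 | v = v3].
Proof.
by case: v => [[|[|[|m]]] Hm] //; [apply: Or31 | apply: Or32 | apply: Or33];
  apply: val_inj.
Qed.

Section FullEmbedding.
Variables (T : finType) (e : rel T).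
Hypotheses (e_sym : symmetric e) (e_irr : irreflexive e).

Definition triple (x y z : T) (v : 'I_3) : T :=
  if val v == 0 then x else if val v == 1 then y else z.

Lemma triple_full_embedding x y z : ~~ e x y -> ~~ e y z -> e x z ->
  full_embedding P3c e (triple x y z).
Proof.
move=> nxy nyz exz.
have nxy' : x != y by apply: contraTneq exz => ->.
have nyz' : y != z by apply: contraTneq exz => <-.
have nxz' : x != z by apply: contraTneq exz => ->; rewrite e_irr.
split=> [a b|a b].
  have neqs := (negbTE nxy', negbTE nyz', negbTE nxz').
  by case: (I3_cases a) => ->; case: (I3_cases b) => -> //= /eqP;
    rewrite ?neqs // eq_sym ?neqs.
have eyx : e y x = false by rewrite e_sym (negbTE nxy).
have ezy : e z y = false by rewrite e_sym (negbTE nyz).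
have ezx : e z x by rewrite e_sym.
by case: (I3_cases a) => ->; case: (I3_cases b) => ->;
  rewrite /= ?e_irr ?(negbTE nxy) ?(negbTE nyz) ?exz ?eyx ?ezy ?ezx.
Qed.
End FullEmbedding.

Section CotransitiveSupport.
Local Open Scope group_scope.
Variables (T : finType) (e : rel T).
Hypotheses (e_sym : symmetric e) (e_irr : irreflexive e).

Lemma fgproj_dependent (Q : pred T) u v : (forall y z, Q y -> Q z -> ~~ e y z) ->
  raag_eq e (u ++ v) (v ++ u) -> dependent (fgproj Q u) (fgproj Q v).
Proof.
move=> Q_anti uv; apply: free_commute_dependent.
rewrite /commute /fgproj -!fgredM -!filter_cat; apply/fgred_eq.
exact: (@red_filter_raag_eq _ e Q Q_anti _ _ uv).
Qed.

Lemma P3c_not_embedded (S : pred T) (g : 'I_3 -> raag_word T) :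
  (forall x y z, S x -> S y -> S z -> ~~ e x y -> ~~ e y z -> ~~ e x z) ->
  (forall v, all (fun l => S l.1) (g v)) ->
  is_raag_hom P3c e g -> ~ raag_hom_injective P3c e g.
Proof.
move=> S_cotr g_S g_hom g_inj.
pose proj x := fgproj (coclass e S x).
have /fin_all_exists[F F_rel] : forall x, exists pq : int * int, S x ->
    pq != (0%R, 0%R) /\ expgz (proj x (g v1)) pq.1 * expgz (proj x (g v3)) pq.2 = 1.
  move=> x; case Sx: (S x); last by exists (0%R, 0%R).
  have [p [q [pq_nz E]]] := fgproj_dependent (coclass_anticlique e_sym S_cotr Sx)
    (g_hom v1 v3 isT).
  by exists (p, q).
pose L := [seq F x | x <- enum T & S x].
apply: (@test_word_nontrivial L).
  by move=> pq /mapP[x]; rewrite mem_filter => /andP[Sx _] ->; case: (F_rel x Sx).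
apply: g_inj; apply: (raag_eq_nil_of_coclass e_sym e_irr S_cotr) => [|x Sx].
  exact: all_hom_ext.
have : proj x (hom_ext g (test_word L)) = 1; last by move/(congr1 val).
rewrite /proj fgproj_geval geval_hom_ext; apply: geval_nest_comm_rel.
exists (F x); first by apply: map_f; rewrite mem_filter Sx mem_enum.
by rewrite -!fgproj_geval; case: (F_rel x Sx).
Qed.
End CotransitiveSupport.

Theorem lemma4p3 (T : finType) (e : rel T)
  (e_sym : symmetric e) (e_irr : irreflexive e)
  (f : 'I_3 -> raag_word T)
  (f_hom : is_raag_hom P3c e f)
  (f_inj : raag_hom_injective P3c e f) :
  exists iota : 'I_3 -> T,
    full_embedding P3c e iota /\ (forall a, in_hom_supp e f (iota a)).
Proof.
apply: NNPP => no_emb.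
have [g g_eq g_min] := shortest_representatives e f.
have [g_hom g_inj] := raag_hom_congr e_sym g_eq f_hom f_inj.
pose S x := [exists v, x \in map fst (g v)].
have S_supp x : S x -> in_hom_supp e f x.
  by case/existsP=> v Hx; exists v, (g v); split; [apply: g_eq | apply: g_min |].
apply: (P3c_not_embedded e_sym e_irr (S := S) _ _ g_hom g_inj).
  move=> x y z Sx Sy Sz nxy nyz; apply/negP => exz; apply: no_emb.
  exists (triple x y z); split; first exact: triple_full_embedding.
  by move=> a; apply: S_supp; case: (I3_cases a) => ->.
by move=> v; apply/allP => l Hl; apply/existsP; exists v; apply: map_f.
Qed.
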